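(* Let $\mathbf{k}$ be an algebraically closed field of characteristic zero, $t\ge2$, and $(n_1,\dots,n_t)$ a dimension vector with $n_1<n_2<\cdots<n_t$. Let $U_i=\mathbf{k}^{n_i}$ and let $Z$ be the variety of tuples $z=(A_1,B_1,\dots,A_{t-1},B_{t-1})$ with $A_i:U_i\to U_{i+1}$, $B_i:U_{i+1}\to U_i$ linear, satisfying $B_1A_1=0$ and $B_{i+1}A_{i+1}=A_iB_i$ for $i=1,\dots,t-2$. Then a point $z\in Z$ belongs to the semistable locus $Z^{ss}$ if and only if $A_1,\dots,A_{t-1}$ are all injective.
   Context: Here $Z^{ss}$ is Nakajima's semistable locus for the action of $H=GL_{n_1}\times\cdots\times GL_{n_{t-1}}$ (acting by $A_i\mapsto h_{i+1}A_ih_i^{-1}$, $B_i\mapsto h_iB_ih_{i+1}^{-1}$, $h_t=\mathrm{id}$) with respect to the character $\chi(h)=\prod_i\det(h_i)^{-1}$; by Nakajima's criterion this is the set of $z\in Z$ such that the only tuple of subspaces $W_i\subseteq U_i$ ($i=1,\dots,t-1$) with $A_i(W_i)\subseteq W_{i+1}$ and $B_i(W_{i+1})\subseteq W_i$ for $i=1,\dots,t-2$ and $A_{t-1}(W_{t-1})=0$ is $W_1=\cdots=W_{t-1}=0$. *)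

From HB Require Import structures.
From mathcomp Require Import all_boot all_order all_algebra.
Set Implicit Arguments. Unset Strict Implicit. Unset Printing Implicit Defensive.
Import GRing.Theory.
Local Open Scope ring_scope.

(* Conventions (0-based): the paper's U_1,...,U_t are U_0,...,U_{t-1},
   with U_i = 'rV[k]_(n i).  Linear maps act on row vectors on the right:
   A i : U_i -> U_{i+1} is v |-> v *m A i, B i : U_{i+1} -> U_i is w |-> w *m B i.
   Only indices i < t-1 are relevant. Composition g \o f is f *m g. *)

Definition in_Z (k : fieldType) (t : nat) (n : nat -> nat)
  (A : forall i, 'M[k]_(n i, n i.+1)) (B : forall i, 'M[k]_(n i.+1, n i)) : Prop :=
  A 0%N *m B 0%N = 0 /\
  (forall i : nat, (i.+2 < t)%N -> A i.+1 *m B i.+1 = B i *m A i).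

(* Nakajima's semistability criterion: subspaces W_i <= U_i are represented by
   the row spaces of square matrices W i (mxalgebra). *)
Definition semistable (k : fieldType) (t : nat) (n : nat -> nat)
  (A : forall i, 'M[k]_(n i, n i.+1)) (B : forall i, 'M[k]_(n i.+1, n i)) : Prop :=
  forall W : forall i, 'M[k]_(n i),
    (forall i : nat, (i.+2 < t)%N ->
        (W i *m A i <= W i.+1)%MS /\ (W i.+1 *m B i <= W i)%MS) ->
    W t.-2 *m A t.-2 = 0 ->
    forall i : nat, (i.+1 < t)%N -> W i = 0.

From HB Require Import structures.
From mathcomp Require Import all_boot all_order all_algebra.
From mathcomp Require Import zify.
Set Implicit Arguments.
Unset Strict Implicit.
Unset Printing Implicit Defensive.

Import GRing.Theory.
Local Open Scope ring_scope.

(* If z is semistable, the kernels W_i := ker A_i form a subrepresentation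
   (the relation B_{i+1} A_{i+1} = A_i B_i makes B_i map ker A_{i+1} into
   ker A_i) that A_{t-1} kills, so they all vanish.  Conversely, if every A_i
   is injective, W_{t-1} = 0 because A_{t-1} kills it, and W_i A_i <= W_{i+1}
   propagates W_i = 0 downwards. *)

Lemma row_free_rV_injective (k : fieldType) m p (M : 'M[k]_(m, p)) :
  row_free M <-> injective (fun v : 'rV[k]_m => v *m M).
Proof.
split; first exact: row_free_inj.
by move=> injM; apply: inj_row_free => v vM0; apply: injM; rewrite /= vM0 mul0mx.
Qed.

Section Semistability.

Variables (k : fieldType) (t : nat) (n : nat -> nat).
Variables (A : forall i, 'M[k]_(n i, n i.+1)) (B : forall i, 'M[k]_(n i.+1, n i)).

Lemma row_free_semistable :
  (forall i, (i.+1 < t)%N -> row_free (A i)) -> semistable t A B.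
Proof.
move=> freeA W stableW WA0.
suff W0 d i : (i.+1 < t)%N -> (i + d)%N = t.-2 -> W i = 0.
  by move=> i lt_i_t; apply: (W0 (t.-2 - i)%N) => //; lia.
elim: d i => [|d IHd] i lt_i_t.
  by rewrite addn0 => def_i; subst i; apply/eqP;
     rewrite -(mulmx_free_eq0 _ (freeA _ lt_i_t)) WA0.
move=> def_t; have lt_i1_t : (i.+2 < t)%N by lia.
have Wi1_0 : W i.+1 = 0 by apply: IHd => //; rewrite addSn -addnS.
apply/eqP; rewrite -(mulmx_free_eq0 _ (freeA i lt_i_t)) -submx0 -Wi1_0.
by case: (stableW i lt_i1_t).
Qed.

Hypothesis commAB : forall i, (i.+2 < t)%N -> A i.+1 *m B i.+1 = B i *m A i.

Lemma kermx_subrep i : (i.+2 < t)%N ->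
  (kermx (A i) *m A i <= kermx (A i.+1))%MS /\
  (kermx (A i.+1) *m B i <= kermx (A i))%MS.
Proof.
move=> lt_i2_t; split; first by rewrite mulmx_ker sub0mx.
by apply/sub_kermxP; rewrite -mulmxA -commAB // mulmxA mulmx_ker mul0mx.
Qed.

Lemma semistable_row_free :
  semistable t A B -> forall i, (i.+1 < t)%N -> row_free (A i).
Proof.
move=> ss i lt_i_t; rewrite -kermx_eq0; apply/eqP.
by apply: (ss (fun i => kermx (A i))) => //; [exact: kermx_subrep | exact: mulmx_ker].
Qed.

End Semistability.

Theorem proposition3 (k : closedFieldType) (Hchar : [pchar k] =i pred0)
  (t : nat) (Ht : (2 <= t)%N) (n : nat -> nat)
  (Hn : forall i : nat, (i.+1 < t)%N -> (n i < n i.+1)%N)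
  (A : forall i, 'M[k]_(n i, n i.+1)) (B : forall i, 'M[k]_(n i.+1, n i))
  (HZ : in_Z t A B) :
  semistable t A B <->
  (forall i : nat, (i.+1 < t)%N -> injective (fun v : 'rV[k]_(n i) => v *m A i)).
Proof.
have [_ commAB] := HZ.
split=> [ss i lt_i_t | injA].
- exact/row_free_rV_injective/(semistable_row_free commAB ss).
- by apply: row_free_semistable => i lt_i_t; apply/row_free_rV_injective/injA.
Qed.
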